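(* Let $F$ be a field with $\operatorname{char}F\ne2$ and let $L/F$ be a Galois extension with $\operatorname{Gal}(L/F)\cong G_1$. Then there is a unique quadratic extension $F(\sqrt a)$ of $F$ such that $F\subseteq F(\sqrt a)\subseteq E\subseteq L$ for some subfield $E$ of $L$ with $E/F$ Galois and $\operatorname{Gal}(E/F)\cong C$. The element $-a$ is not rigid.
   Context: $C$ is the cyclic group of order 4. An element $c\in\dot F\setminus(F^2\cup-F^2)$ is rigid if the set of nonzero values of $x_1^2+cx_2^2$ equals $\dot F^2\cup c\dot F^2$, and nonrigid otherwise. Commutators $[\sigma,\tau]=\sigma^{-1}\tau^{-1}\sigma\tau$. $G_1$ is the group generated by $x,y$ with relations $x^4=y^2=1$, $[x,y]^2=[[x,y],x]^2=1$, and $[[x,y],x]$ commutes with $x$ and $y$. *)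

From HB Require Import structures.
From mathcomp Require Import all_boot all_order all_algebra all_fingroup all_solvable all_field galois falgebra fieldext.
Set Implicit Arguments. Unset Strict Implicit. Unset Printing Implicit Defensive.
Import GRing.Theory.
Local Open Scope ring_scope.

Definition rigid (F : fieldType) (c : F) : Prop :=
  [/\ c != 0,
      ~ (exists b : F, c = b ^+ 2),
      ~ (exists b : F, c = - b ^+ 2) &
      forall v : F, v != 0 ->
        ((exists x1 x2 : F, v = x1 ^+ 2 + c * x2 ^+ 2) <->
         (exists b : F, b != 0 /\ (v = b ^+ 2 \/ v = c * b ^+ 2)))].

Definition C4_quadratic (F : fieldType) (L : splittingFieldType F)
    (K : {subfield L}) : Prop :=
  \dim K = 2%N /\
  exists E : {subfield L},
    [/\ (K <= E)%VS, galois 1%AS E, cyclic ('Gal(E / 1%AS))%g & #|('Gal(E / 1%AS))%g| = 4%N].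

(* Gal(L/F) is generated by x, y subject to the relations of G1, so it maps
   onto the cyclic group <r> of order 4 (x |-> r, y |-> 1) and onto the dihedral
   group <r, s> of order 8 (x |-> r, y |-> s).  The quadratic field K = F(sqrt a)
   is the fixed field of the index-2 subgroup S of elements of "even x-degree";
   every cyclic quotient of order 4 induces the same parity on the generators,
   hence K is the only candidate.  The cyclic quotient makes -1 a norm from K,
   -1 = u^2 - a v^2, and the dihedral quotient provides gamma in K and delta
   moved by y with delta^2 = N(gamma) in F.  If -a were rigid, -1 would be a
   square, and then N(gamma) in F^2 \cup a F^2 would force delta into F or into
   F sqrt a, both of which are fixed by y. *)

From HB Require Import structures.
From mathcomp Require Import all_boot all_order all_algebra all_fingroup all_solvable all_field galois falgebra fieldext.
From mathcomp Require Import ring.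
Import GRing.Theory.
Set Implicit Arguments. Unset Strict Implicit. Unset Printing Implicit Defensive.

Local Open Scope group_scope.

Definition G1rel (gT : finGroupType) (a b : gT) : bool :=
  [&& a ^+ 4 == 1, b ^+ 2 == 1, [~ a, b] ^+ 2 == 1, [~ [~ a, b], a] ^+ 2 == 1,
      [~ [~ [~ a, b], a], a] == 1 & [~ [~ [~ a, b], a], b] == 1].

Lemma homG1P (gT : finGroupType) (G : {set gT}) :
  reflect (exists a b : gT, <[a]> <*> <[b]> = G /\ G1rel a b)
    (G \homg Grp (x : y : (x ^+ 4, y ^+ 2, [~ x, y] ^+ 2, [~ [~ x, y], x] ^+ 2,
                          [~ [~ [~ x, y], x], x], [~ [~ [~ x, y], x], y]))).
Proof.
apply: (iffP existsP) => [[[a b]] | [a [b [<- relab]]]]; last first.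
  by exists (a, b); rewrite /= !xpair_eqE /= eqxx.
by rewrite /= !xpair_eqE /= => /andP[/eqP defG relab]; exists a, b.
Qed.

Lemma expg_pair (gT rT : finGroupType) (a : gT) (p : rT) n :
  ((a, p) : gT * rT) ^+ n = (a ^+ n, p ^+ n).
Proof. by elim: n => [|n IHn]; rewrite ?expg0 // !expgS IHn. Qed.

Lemma G1rel_pair (gT rT : finGroupType) (a b : gT) (p q : rT) :
  G1rel a b -> G1rel p q -> G1rel ((a, p) : gT * rT) (b, q).
Proof.
have commE (u v : gT) (s t : rT) :
  [~ ((u, s) : gT * rT), (v, t)] = ([~ u, v], [~ s, t]) by [].
rewrite /G1rel !commE !expg_pair !xpair_eqE.
by move=> /and5P[-> -> -> -> /andP[-> ->]] /and5P[-> -> -> -> /andP[-> ->]].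
Qed.

Lemma G1_morphism (gT rT : finGroupType) (G : {group gT}) (a b : gT) (p q : rT) :
    G \isog Grp (x : y : (x ^+ 4, y ^+ 2, [~ x, y] ^+ 2, [~ [~ x, y], x] ^+ 2,
                         [~ [~ [~ x, y], x], x], [~ [~ [~ x, y], x], y])) ->
    <[a]> <*> <[b]> = G -> G1rel a b -> G1rel p q ->
  exists f : {morphism G >-> rT}, f a = p /\ f b = q.
Proof.
move=> isoG defG relab relpq.
pose H := (<[((a, p) : gT * rT)]> <*> <[(b, q)]>)%G.
pose pr := restrm (subsetT H) (@fst_morphism gT rT).
have im_pr : pr @* H = G.
  by rewrite morphim_restrm setIid morphimY ?subsetT // !morphim_cycle ?inE.
(* H is a quotient of G1, which is isomorphic to its image G. *)
have inj_pr : 'injm pr.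
  rewrite -card_im_injm im_pr eqn_leq -{1}im_pr leq_morphim leq_homg //.
  by rewrite isoG; apply/homG1P; exists (a, p), (b, q); split; last exact: G1rel_pair.
pose f u := (invm inj_pr u).2.
have fM : {in G &, {morph f : u v / u * v}}.
  by move=> u v Gu Gv; rewrite /f morphM ?im_pr.
have invmE2 u s : (u, s) \in H -> f u = s.
  by move=> Hus; rewrite /f -[u]/(pr (u, s)) invmE.
exists (Morphism fM); split; apply: invmE2; apply: mem_gen.
  by rewrite inE cycle_id.
by rewrite inE cycle_id orbT.
Qed.

Lemma cycle_order4_sqr1M (gT : finGroupType) (h u v : gT) :
    #[h] = 4%N -> u \in <[h]> -> v \in <[h]> ->
  ((u * v) ^+ 2 == 1) = ((u ^+ 2 == 1) == (v ^+ 2 == 1)).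
Proof.
move=> oh /cycleP[i ->] /cycleP[j ->].
have sqr1 k : ((h ^+ k) ^+ 2 == 1) = ~~ odd k.
  by rewrite -expgM -order_dvdn oh (_ : 4 = 2 * 2)%N // dvdn_pmul2r // dvdn2.
by rewrite -expgD !sqr1 oddD; case: (odd i); case: (odd j).
Qed.

Section Parity.
Variables (gT : finGroupType) (G : {group gT}).

(* A homomorphism from G to Z/2, written with true as the neutral element. *)
Definition parity (p : gT -> bool) :=
  forall u v, u \in G -> v \in G -> p (u * v) = (p u == p v).

Lemma parity1 p : parity p -> p 1 = true.
Proof. by move/(_ 1 1); rewrite mulg1 eqxx => ->. Qed.

Lemma parity_gen_eq (x y : gT) p1 p2 :
    <[x]> <*> <[y]> = G -> parity p1 -> parity p2 ->
  p1 x = p2 x -> p1 y = p2 y -> {in G, p1 =1 p2}.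
Proof.
move=> defG par1 par2 eqx eqy.
have agree_gs : group_set [set u in G | p1 u == p2 u].
  apply/group_setP; split=> [|u v]; first by rewrite inE group1 !parity1.
  rewrite !inE => /andP[Gu /eqP equ] /andP[Gv /eqP eqv].
  by rewrite groupM // (par1 _ _ Gu Gv) (par2 _ _ Gu Gv) equ eqv eqxx.
have Gx : x \in G by rewrite -defG mem_gen // inE cycle_id.
have Gy : y \in G by rewrite -defG mem_gen // inE cycle_id orbT.
have : G \subset Group agree_gs.
  by rewrite -{1}defG join_subG !cycle_subG !inE Gx Gy eqx eqy !eqxx.
by move/subsetP=> sG u /sG; rewrite inE => /andP[_ /eqP].
Qed.

Variables (p : gT -> bool) (p_parity : parity p).

Fact parity_kernel_group_set : group_set [set u in G | p u].
Proof.
apply/group_setP; split=> [|u v]; first by rewrite inE group1 parity1.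
by rewrite !inE => /andP[Gu pu] /andP[Gv pv]; rewrite groupM // (p_parity Gu Gv) pu pv.
Qed.
Canonical parity_kernel := Group parity_kernel_group_set.

Lemma index_parity_kernel x : x \in G -> p x = false -> #|G : parity_kernel| = 2.
Proof.
move=> Gx px; have sSG : parity_kernel \subset G by apply/subsetP=> u /setIdP[].
have pxV : p x^-1 = false.
  by have := p_parity Gx (groupVr Gx); rewrite mulgV parity1 // px; case: (p _).
have coset : G :\: parity_kernel = parity_kernel :* x.
  apply/setP=> u; rewrite !inE mem_rcoset !inE.
  have [Gu | nGu] /= := boolP (u \in G).
    by rewrite groupMl ?groupV // (p_parity Gu (groupVr Gx)) pxV Gx; case: (p u).
  apply/esym/negbTE; apply: contra nGu => /andP[Gux _].
  by rewrite -(mulgKV x u) groupM.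
rewrite -divgS // -(cardsID parity_kernel G) (setIidPr sSG) coset card_rcoset.
by rewrite addnn -muln2 mulKn ?cardG_gt0.
Qed.

End Parity.

(* The pair (k, e) encodes rot ^+ k * refl ^+ e. *)
Definition dih8 := ('Z_4 * bool)%type.
HB.instance Definition _ := Finite.on dih8.

Definition dih8_mul (d e : dih8) : dih8 :=
  ((d.1 + (if d.2 then - e.1 else e.1))%R, d.2 (+) e.2).
Definition dih8_inv (d : dih8) : dih8 := (if d.2 then d.1 else (- d.1)%R, d.2).
Definition dih8_one : dih8 := (0%R, false).

Fact dih8_mulA : associative dih8_mul.
Proof.
move=> [k e] [l f] [m g]; rewrite /dih8_mul /=; congr (_, _); last by rewrite addbA.
by case: e; case: f => /=; rewrite ?opprD ?opprK addrA.
Qed.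

Fact dih8_mul1 : left_id dih8_one dih8_mul.
Proof. by move=> [k e]; rewrite /dih8_mul /= add0r. Qed.

Fact dih8_mulV : left_inverse dih8_one dih8_inv dih8_mul.
Proof.
move=> [k e]; rewrite /dih8_mul /dih8_inv /=.
by case: e; rewrite /= ?subrr ?addNr // addbb.
Qed.

HB.instance Definition _ := Finite_isGroup.Build dih8 dih8_mulA dih8_mul1 dih8_mulV.

Definition rot : dih8 := (1%R, false).
Definition refl : dih8 := (0%R, true).

Definition rotation (d : dih8) := ~~ d.2.
Definition even_dih8 (d : dih8) := ~~ odd (val d.1).

Ltac dih8_cases d := case: d => [[[|[|[|[|?]]]] ?] []]; try by [].

Lemma G1rel_rot_refl : G1rel rot refl. Proof. by vm_compute. Qed.
Lemma G1rel_rot_1 : G1rel rot 1. Proof. by vm_compute. Qed.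

Lemma rot4 : rot ^+ 4 = 1. Proof. by apply/eqP; vm_compute. Qed.

Lemma order_rot : #[rot] = 4%N.
Proof.
have : (#[rot] %| 4)%N by rewrite order_dvdn rot4.
have : ~~ (#[rot] %| 2)%N by rewrite order_dvdn; vm_compute.
by case: #[rot] => [|[|[|[|[|]]]]].
Qed.

Lemma rotationM (d e : dih8) : rotation (d * e) = (rotation d == rotation e).
Proof. by dih8_cases d; dih8_cases e; vm_compute. Qed.

Lemma even_dih8M (d e : dih8) : even_dih8 (d * e) = (even_dih8 d == even_dih8 e).
Proof. by dih8_cases d; dih8_cases e; vm_compute. Qed.

Lemma even_rotation (d : dih8) :
  even_dih8 d -> rotation d -> (d == 1) || (d == rot ^+ 2).
Proof. by dih8_cases d; vm_compute; move=> *. Qed.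

Lemma rot2_central (d : dih8) : commute (rot ^+ 2) d.
Proof. by apply/eqP; dih8_cases d; vm_compute. Qed.

Lemma rot2_neq1 : rot ^+ 2 != 1. Proof. by vm_compute. Qed.

Fact refl_group_set : group_set [set d : dih8 | d.1 == 0%R].
Proof.
apply/group_setP; split=> [|d e]; rewrite !inE //.
by dih8_cases d; dih8_cases e; vm_compute.
Qed.
Canonical refl_group := Group refl_group_set.

Lemma refl_group_refl : refl \in refl_group. Proof. by rewrite inE. Qed.

Lemma refl_group_rot_refl_rot : rot * refl * rot \in refl_group.
Proof. by rewrite inE; vm_compute. Qed.

Lemma refl_group_rot2 : rot ^+ 2 \notin refl_group.
Proof. by rewrite inE; vm_compute. Qed.

Lemma even_dih8_refl_coset (d : dih8) :
  even_dih8 d -> (d \in refl_group) || (d * rot ^+ 2 \in refl_group).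
Proof. by rewrite !inE; dih8_cases d; vm_compute; move=> *. Qed.

Section FixedFields.
Local Open Scope ring_scope.
Variables (F : fieldType) (L : splittingFieldType F).
Implicit Types (A : {set gal_of {:L}}) (H : {group gal_of {:L}}) (g : gal_of {:L}).

Lemma galMf g1 g2 (a : L) : (g1 * g2)%g a = g2 (g1 a).
Proof. exact: galM (memvf a). Qed.

Lemma fixedField_gen A : fixedField <<A>> = fixedField A.
Proof.
apply/eqP; rewrite eqEsubv fixedFieldS ?subset_gen //=.
by rewrite -galois_connection ?subvf // gen_subG galois_connection_subset.
Qed.

Lemma fixedField_moved H g : g \notin H -> exists2 t, t \in fixedField H & g t != t.
Proof.
move=> Hg; have : ~~ (fixedField H <= fixedField [set g])%VS.
  by rewrite -galois_connection ?subvf // gal_fixedField sub1set.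
case/subvPn=> t Ht nfix_t; exists t => //; apply: contraNneq nfix_t => gt.
by apply/fixedFieldP=> [|_ /set1P ->]; first exact: memvf.
Qed.

Lemma fixedField_norm H g (z : L) :
  g \in 'N(H) -> z \in fixedField H -> g z \in fixedField H.
Proof.
move=> nHg /mem_fixedFieldP[_ fix_z]; apply/fixedFieldP=> [|h Hh]; first exact: memvf.
by rewrite -galMf conjgCV galMf fix_z // memJ_norm ?groupV.
Qed.

Lemma fixedField_join H g (z : L) :
  z \in fixedField H -> g z = z -> z \in fixedField (H <*> <[g]>)%g.
Proof.
move=> /mem_fixedFieldP[_ fix_z] gz; rewrite joing_idr joingE fixedField_gen.
by apply/fixedFieldP=> [|h /setUP[/fix_z // | /set1P ->]]; first exact: memvf.
Qed.

Lemma fixedField_anti H tau :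
    tau \in 'N(H) -> tau \notin H -> (tau ^+ 2)%g \in H ->
  exists b : L, [/\ b != 0, tau b = - b & b \in fixedField H].
Proof.
move=> nH_tau H'tau H_tau2; have [t Ht tau_t] := fixedField_moved H'tau.
have [_ fix_t] := mem_fixedFieldP Ht.
exists (t - tau t); split; first by rewrite subr_eq0 eq_sym.
  by rewrite rmorphB /= -galMf -expg2 (fix_t _ H_tau2) opprB.
by rewrite memvB ?fixedField_norm.
Qed.

End FixedFields.

Section G1Extension.
Local Open Scope ring_scope.
Variables (F : fieldType) (L : splittingFieldType F).
Hypothesis galL : galois 1%AS {:L}.
Local Notation Gal := 'Gal({:L} / 1%AS)%g.

Variables gx gy : gal_of {:L}.
Hypotheses (defGal : (<[gx]> <*> <[gy]>)%g = Gal) (gy2 : (gy ^+ 2 = 1)%g).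
Variables phi4 phi8 : {morphism Gal >-> dih8}.
Hypotheses (phi4x : phi4 gx = rot) (phi4y : phi4 gy = 1%g).
Hypotheses (phi8x : phi8 gx = rot) (phi8y : phi8 gy = refl).

Lemma Gal_gx : gx \in Gal. Proof. by rewrite -defGal mem_gen // inE cycle_id. Qed.
Lemma Gal_gy : gy \in Gal. Proof. by rewrite -defGal mem_gen // inE cycle_id orbT. Qed.

Lemma mem1_fixed (z : L) : gx z = z -> gy z = z -> z \in 1%VS.
Proof.
move=> xz yz; rewrite -(elimT galois_fixedField galL) -defGal.
rewrite joing_idl joing_idr joingE fixedField_gen.
by apply/fixedFieldP=> [|g /setUP[] /set1P ->]; first exact: memvf.
Qed.

Definition par4 g := even_dih8 (phi4 g).
Definition par8 g := even_dih8 (phi8 g).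

Lemma par4_parity : parity Gal par4.
Proof. by move=> u v Gu Gv; rewrite /par4 morphM // even_dih8M. Qed.

Lemma par8_parity : parity Gal par8.
Proof. by move=> u v Gu Gv; rewrite /par8 morphM // even_dih8M. Qed.

Lemma par4_par8 : {in Gal, par4 =1 par8}.
Proof.
apply: (parity_gen_eq defGal par4_parity par8_parity).
  by rewrite /par4 /par8 phi4x phi8x.
by rewrite /par4 /par8 phi4y phi8y.
Qed.

Definition S := parity_kernel par4_parity.
Definition K : {subfield L} := fixedField_aspace S.

Lemma mem_S g : (g \in S) = (g \in Gal) && par4 g. Proof. by rewrite inE. Qed.
Lemma S_gy : gy \in S. Proof. by rewrite mem_S Gal_gy /par4 phi4y. Qed.
Lemma S'_gx : gx \notin S. Proof. by rewrite mem_S /par4 phi4x andbF. Qed.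
Lemma S_gx2 : (gx ^+ 2)%g \in S.
Proof. by rewrite mem_S groupX ?Gal_gx //= /par4 morphX ?Gal_gx // phi4x. Qed.

Lemma index_S : #|Gal : S| = 2.
Proof. by apply: index_parity_kernel Gal_gx _; rewrite /par4 phi4x. Qed.

Lemma S_normal : S <| Gal.
Proof. by apply: index2_normal index_S; apply/subsetP=> g; rewrite mem_S => /andP[]. Qed.

Lemma norm_S_gx : gx \in 'N(S).
Proof. exact: subsetP (normal_norm S_normal) _ Gal_gx. Qed.

Lemma dim_K : \dim K = 2.
Proof.
by have := dim_fixed_galois galL (normal_sub S_normal); rewrite index_S dimv1 divn1.
Qed.

Lemma K_fixed (z : L) g : z \in K -> g \in S -> g z = z.
Proof. by case/mem_fixedFieldP=> _ fix_z /fix_z. Qed.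

Lemma K_gx (z : L) : z \in K -> gx z \in K.
Proof. exact: fixedField_norm norm_S_gx. Qed.

Lemma K_gx2 (z : L) : z \in K -> gx (gx z) = z.
Proof. by move=> Kz; rewrite -galMf -expg2 (K_fixed Kz S_gx2). Qed.

Lemma mem1_K (z : L) : z \in K -> gx z = z -> z \in 1%VS.
Proof. by move=> Kz /mem1_fixed; apply; apply: K_fixed S_gy. Qed.

Hypothesis charF : (2 \notin [pchar F])%N.

Lemma two_neq0 : (2%:R : L) != 0.
Proof.
have two_neq0F : (2%:R : F) != 0 by move: charF; rewrite inE.
by rewrite -(rmorph_nat (in_alg L)) fmorph_eq0.
Qed.

Lemma eq_oppr_eq0 (z : L) : (z == - z) = (z == 0).
Proof. by rewrite -addr_eq0 -mulr2n -mulr_natl mulf_eq0 (negbTE two_neq0). Qed.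

Lemma K_sqrt : exists (a : F) (r : L), r ^+ 2 = a%:A /\ K = <<1; r>>%AS.
Proof.
have [r [r_neq0 xr Kr]] := fixedField_anti norm_S_gx S'_gx S_gx2.
have yr : gy r = r := K_fixed Kr S_gy.
have [a ra] : exists a : F, r ^+ 2 = a%:A.
  have /vlineP[a ->] : r ^+ 2 \in 1%VS.
    by apply: mem1_fixed; rewrite rmorphXn /= ?xr ?yr ?sqrrN.
  by exists a.
exists a, r; split=> //.
have r'1 : r \notin 1%VS.
  apply: contraNN r_neq0 => /vlineP[k rk]; rewrite -eq_oppr_eq0 -xr rk.
  by rewrite rmorph_alg.
apply/val_inj/eqP; rewrite eq_sym /= eqEdim dim_K.
rewrite (introT FadjoinP (conj (sub1v K) Kr)) dim_Fadjoin dimv1 muln1 /=.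
by rewrite ltn_neqAle eq_sym adjoin_deg_eq1 r'1.
Qed.

Lemma phi4_rotation g : g \in Gal -> rotation (phi4 g).
Proof.
have rotation_parity : parity Gal (rotation \o phi4).
  by move=> u v Gu Gv; rewrite /= morphM // rotationM.
have const_parity : parity Gal (fun=> true) by [].
move=> Gg; rewrite -[_ (phi4 g)]/((rotation \o phi4) g).
by rewrite (parity_gen_eq defGal rotation_parity const_parity) //= ?phi4x ?phi4y.
Qed.

Lemma im_phi4 : phi4 @* Gal = <[rot]>.
Proof.
transitivity (phi4 @* (<[gx]> <*> <[gy]>)); first by rewrite defGal.
rewrite morphimY ?cycle_subG ?Gal_gx ?Gal_gy //.
by rewrite !morphim_cycle ?Gal_gx ?Gal_gy // phi4x phi4y cycle1 joingG1.
Qed.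

Lemma ker_phi4_sub_S : 'ker phi4 \subset S.
Proof.
apply/subsetP=> g ker_g; have Gg := dom_ker ker_g.
by rewrite mem_S Gg /par4 (mker ker_g).
Qed.

Lemma S_sub_ker_phi4_join : S \subset 'ker phi4 <*> <[gx ^+ 2]>.
Proof.
apply/subsetP=> g; rewrite mem_S => /andP[Gg par_g].
have Gx2 : (gx ^+ 2)%g \in Gal := groupX 2 Gal_gx.
have join_ker := subsetP (joing_subl ('ker phi4) <[gx ^+ 2]>).
have [/eqP phi_g | /eqP phi_g] := orP (even_rotation par_g (phi4_rotation Gg)).
  by apply: join_ker; apply/kerP.
rewrite -(mulgKV (gx ^+ 2)%g g); apply: groupM; last first.
  exact: subsetP (joing_subr _ _) _ (cycle_id _).
apply: join_ker; apply/kerP; first by rewrite groupM ?groupV.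
by rewrite morphM ?groupV // morphV // morphX ?Gal_gx // phi_g phi4x mulgV.
Qed.

Lemma C4_quadratic_K : C4_quadratic K.
Proof.
split; first exact: dim_K.
pose E : {subfield L} := fixedField_aspace ('ker phi4).
have galE : galois 1 E := normal_fixedField_galois galL (ker_normal phi4).
have sE : (1 <= E <= {:L})%VS by rewrite sub1v subvf.
have nE : normalField 1 E by case/and3P: galE.
have isoE : ('Gal(E / 1%AS) \isog <[rot]>)%g.
  rewrite -im_phi4; apply: isog_trans (first_isog phi4).
  by have := normalField_isog galL sE nE; rewrite gal_fixedField isog_sym.
exists E; split=> //; first exact: fixedFieldS ker_phi4_sub_S.
  by rewrite (isog_cyclic isoE) cycle_cyclic.
by rewrite (card_isog isoE) -orderE order_rot.
Qed.

Lemma gx2_gx (z : L) : (gx ^+ 2)%g (gx z) = gx ((gx ^+ 2)%g z).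
Proof. by rewrite -!galMf -expgS -expgSr. Qed.

(* For b with (gx ^+ 2) b = - b, eta := gx b / b has norm (gx ^+ 2) b / b = -1. *)
Lemma norm_minus1 : exists2 eta, eta \in K & eta * gx eta = -1.
Proof.
set tau := (gx ^+ 2)%g; have Gtau : tau \in Gal := groupX 2 Gal_gx.
have phi4_tau : phi4 tau = (rot ^+ 2)%g by rewrite morphX ?Gal_gx // phi4x.
have [b [b_neq0 tau_b ker_b]] : exists b : L,
    [/\ b != 0, tau b = - b & b \in fixedField ('ker phi4)].
  apply: fixedField_anti; first exact: subsetP (ker_norm phi4) _ Gtau.
    by apply/(kerP phi4 Gtau); rewrite phi4_tau; apply/eqP; exact: rot2_neq1.
  by apply/(kerP phi4 (groupX 2 Gtau)); rewrite morphX // phi4_tau -expgM rot4.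
have gxb_neq0 : gx b != 0 by rewrite fmorph_eq0.
exists (gx b / b).
  apply: (subvP (fixedFieldS S_sub_ker_phi4_join)); apply: fixedField_join.
    by rewrite memvM ?memvV ?fixedField_norm ?(subsetP (ker_norm phi4)) ?Gal_gx.
  by rewrite rmorphM fmorphV /= gx2_gx tau_b rmorphN mulNr invrN mulrN opprK.
rewrite rmorphM fmorphV /= -galMf -expg2 tau_b.
by field; rewrite b_neq0 gxb_neq0.
Qed.

Lemma dihedral_sqrt : exists (gamma delta : L),
  [/\ gamma \in K, delta != 0, gy delta = - delta & delta ^+ 2 = gamma * gx gamma].
Proof.
set tau := (gx ^+ 2)%g; have Gtau : tau \in Gal := groupX 2 Gal_gx.
have phi8_tau : phi8 tau = (rot ^+ 2)%g by rewrite morphX ?Gal_gx // phi8x.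
pose U := (phi8 @*^-1 refl_group)%G.
have mem_U g : g \in Gal -> (g \in U) = (phi8 g \in refl_group) by move=> Gg; rewrite !inE Gg.
have [b [b_neq0 tau_b U_b]] : exists b : L, [/\ b != 0, tau b = - b & b \in fixedField U].
  apply: fixedField_anti.
  - have nU : tau \in phi8 @*^-1 'N(refl_group).
      apply/morphpreP; split=> //; rewrite phi8_tau; apply: (subsetP (cent_sub _)).
      by apply/centP=> d _; apply: rot2_central.
    exact: subsetP (morphpre_norm phi8 refl_group) _ nU.
  - by rewrite mem_U // phi8_tau refl_group_rot2.
  - by rewrite mem_U ?(groupX 2 Gtau) // morphX // phi8_tau -expgM rot4 group1.
have [_ fix_b] := mem_fixedFieldP U_b.
have S_sub_U_join : S \subset U <*> <[tau]>.
  apply/subsetP=> g; rewrite mem_S => /andP[Gg par_g].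
  have Gg_tau : (g * tau)%g \in Gal by rewrite groupM.
  rewrite par4_par8 // in par_g; case/orP: (even_dih8_refl_coset par_g) => U_g.
    by apply: (subsetP (joing_subl _ _)); rewrite mem_U.
  rewrite -(mulgK tau g); apply: groupM; last by rewrite groupV mem_gen // inE cycle_id orbT.
  by apply: (subsetP (joing_subl _ _)); rewrite mem_U // morphM // phi8_tau.
have gx_V : (gx^-1)%g b = - gx b.
  have <- : (tau * gx^-1)%g b = gx b by rewrite /tau expg2 mulgK.
  by rewrite galMf tau_b rmorphN opprK.
have gy_gx_b : gy (gx b) = - gx b.
  have U_w : (gx * gy * gx)%g \in U.
    have Gxy := groupM Gal_gx Gal_gy.
    rewrite (mem_U _ (groupM Gxy Gal_gx)) (morphM phi8 Gxy Gal_gx) (morphM phi8 Gal_gx Gal_gy).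
    by rewrite phi8x phi8y refl_group_rot_refl_rot.
  by rewrite -galMf -(mulgK gx (gx * gy)%g) galMf (fix_b _ U_w) gx_V.
exists (b ^+ 2), (b * gx b); split.
- apply: (subvP (fixedFieldS S_sub_U_join)); apply: fixedField_join.
    by rewrite memvM.
  by rewrite rmorphXn /= tau_b sqrrN.
- by rewrite mulf_neq0 ?fmorph_eq0.
- by rewrite rmorphM /= fix_b ?gy_gx_b ?mulrN // mem_U ?Gal_gy // phi8y refl_group_refl.
- by rewrite rmorphXn exprMn.
Qed.

Lemma S_sqr1_C4_quotient (gT : finGroupType) (psi : {morphism Gal >-> gT}) h :
  psi @* Gal = <[h]> -> #[h] = 4%N -> {in S, forall g, psi g ^+ 2 = 1}%g.
Proof.
move=> im_psi oh.
have psiC g : g \in Gal -> psi g \in <[h]> by move=> Gg; rewrite -im_psi mem_morphim.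
pose ev g := (psi g ^+ 2 == 1)%g.
have ev_parity : parity Gal ev.
  by move=> u v Gu Gv; rewrite /ev morphM // (cycle_order4_sqr1M oh) ?psiC.
have ev_gy : ev gy by rewrite /ev -morphX ?Gal_gy // gy2 morph1.
have ev_gx : ev gx = false.
  apply/negbTE/negP=> ev_x; have const_parity : parity Gal (fun=> true) by [].
  have ev1 := parity_gen_eq defGal ev_parity const_parity ev_x ev_gy.
  have /morphimP[g Gg _ h_g] : h \in psi @* Gal by rewrite im_psi cycle_id.
  by have := ev1 g Gg; rewrite /ev -h_g -order_dvdn oh.
move=> g; rewrite mem_S => /andP[Gg par_g]; apply/eqP.
rewrite -[_ == _]/(ev g) -(parity_gen_eq defGal par4_parity ev_parity) //.
  by rewrite /par4 phi4x ev_gx.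
by rewrite /par4 phi4y ev_gy.
Qed.

Lemma C4_quadratic_unique (K' : {subfield L}) : C4_quadratic K' -> K' = K.
Proof.
case=> dimK' [E [sK'E galE cycE oE]].
have sE : (1 <= E <= {:L})%VS by rewrite sub1v subvf.
have nE : normalField 1 E by case/and3P: galE.
pose psi := normalField_cast_morphism sE nE.
have [h defC] := cyclicP cycE.
have im_psi : psi @* Gal = <[h]> by rewrite -defC (normalField_img galL sE nE).
have oh : #[h] = 4%N by rewrite orderE -defC oE.
have oT : #|'Gal(E / K')| = 2.
  have := galois_dim galE; rewrite dimv1 divn1 oE => dimE.
  by rewrite -galois_dim ?(galoisS _ galE) ?sub1v // dimE dimK'.
have sTC : 'Gal(E / K') \subset <[h]> by rewrite -defC galS ?sub1v.
apply/val_inj/eqP; rewrite eqEdim dim_K dimK' leqnn andbT.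
apply/subvP=> a K'a; apply/fixedFieldP=> [|g Sg]; first exact: memvf.
have Gg : g \in Gal by move: Sg; rewrite mem_S => /andP[].
rewrite -(normalField_cast_eq sE nE Gg (subvP sK'E a K'a)).
apply: (fixed_gal sK'E) K'a; rewrite -cycle_subG.
have psiC : psi g \in <[h]> by rewrite -im_psi mem_morphim.
rewrite -(cardSg_cyclic (cycle_cyclic h)) ?cycle_subG // oT -orderE order_dvdn.
by apply/eqP; apply: S_sqr1_C4_quotient im_psi oh _ Sg.
Qed.

Lemma sqr_anti_fixed_neq (g : gal_of {:L}) (d z : L) :
  g z = z -> g d = - d -> d != 0 -> d ^+ 2 != z ^+ 2.
Proof.
move=> gz gd; apply: contraNN; rewrite eqf_sqr -eq_oppr_eq0.
by case/orP=> /eqP dz; rewrite -gd dz ?rmorphN /= gz.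
Qed.

Lemma K_sqrt_anti (a : F) (r : L) :
  r ^+ 2 = a%:A -> K = <<1; r>>%AS -> [/\ r \in K, r \notin 1%VS & gx r = - r].
Proof.
move=> ra defK; have Kr : r \in K by rewrite defK memv_adjoin.
have r'1 : r \notin 1%VS.
  by apply: contraTN isT => /Fadjoin_idP r1; have := dim_K; rewrite defK /= r1 dimv1.
split=> //; have : gx r ^+ 2 == r ^+ 2 by rewrite -rmorphXn /= ra rmorph_alg.
rewrite eqf_sqr => /orP[/eqP xr | /eqP //].
by case/negP: r'1; apply: mem1_K.
Qed.

Lemma norm_K_form (a : F) (r eta : L) :
    r ^+ 2 = a%:A -> K = <<1; r>>%AS -> eta \in K ->
  exists u v : F, eta * gx eta = (u ^+ 2 - a * v ^+ 2)%:A.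
Proof.
move=> ra defK Keta; have [Kr r'1 xr] := K_sqrt_anti ra defK.
have r_neq0 : r != 0 by apply: contraNneq r'1 => ->; rewrite mem0v.
have in1 z : gx z = z -> gy z = z -> exists c : F, z = c%:A.
  by move=> xz yz; have /vlineP[c ->] := mem1_fixed xz yz; exists c.
have yr := K_fixed Kr S_gy; have yeta := K_fixed Keta S_gy.
have yxeta := K_fixed (K_gx Keta) S_gy; have xxeta := K_gx2 Keta.
have [u eu] : exists u : F, (eta + gx eta) / 2%:R = u%:A.
  apply: in1; rewrite rmorphM fmorphV rmorphD /= rmorph_nat ?xxeta ?yeta ?yxeta //.
  by rewrite addrC.
have [v ev] : exists v : F, (eta - gx eta) / (2%:R * r) = v%:A.
  apply: in1; rewrite rmorphM fmorphV rmorphB rmorphM /= rmorph_nat;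
    rewrite ?xxeta ?xr ?yeta ?yxeta ?yr //.
  by rewrite mulrN invrN mulrN -mulNr opprB.
exists u, v.
have -> : eta * gx eta =
    ((eta + gx eta) / 2%:R) ^+ 2 - ((eta - gx eta) / (2%:R * r)) ^+ 2 * r ^+ 2.
  by field; rewrite r_neq0 two_neq0.
by rewrite eu ev ra -!in_algE -!rmorphXn -!rmorphM -rmorphB mulrC.
Qed.

(* -1 is a norm from K, so rigidity puts it in F^2 or in -a F^2; the latter
   would make a a square. *)
Lemma rigid_sqr_minus1 (a : F) (r : L) :
  r ^+ 2 = a%:A -> K = <<1; r>>%AS -> rigid (- a) -> exists b : F, b ^+ 2 = -1.
Proof.
move=> ra defK [_ _ _ rig_a]; have [_ r'1 _] := K_sqrt_anti ra defK.
have [eta Keta norm_eta] := norm_minus1.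
have [u [v euv]] := norm_K_form ra defK Keta.
have [b [b_neq0 [b2 | ab2]]] : exists b : F, b != 0 /\ (-1 = b ^+ 2 \/ -1 = - a * b ^+ 2).
- apply/(rig_a (-1)); first by rewrite oppr_eq0 oner_neq0.
  exists u, v; apply: (fmorph_inj (in_alg L)).
  by rewrite rmorphN rmorph1 -norm_eta euv /= mulNr.
- by exists b.
case/negP: r'1; have ea : a = b^-1 ^+ 2.
  apply: (mulIf (expf_neq0 2 b_neq0)); rewrite exprVn mulVf ?expf_neq0 //.
  by apply: oppr_inj; rewrite ab2 mulNr.
have : r ^+ 2 == (b^-1)%:A ^+ 2 by rewrite ra ea -!in_algE rmorphXn.
by rewrite eqf_sqr => /orP[] /eqP ->; rewrite ?rpredN memvZ ?memv_line.
Qed.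

(* The norm t of gamma is delta ^+ 2 with delta moved by gy; rigidity puts t in
   F^2 or in a F^2 (as -1 is a square), making delta an element of F or of
   F r, both fixed by gy. *)
Lemma not_rigid (a : F) (r : L) : r ^+ 2 = a%:A -> K = <<1; r>>%AS -> ~ rigid (- a).
Proof.
move=> ra defK rig; have [b b2m1] := rigid_sqr_minus1 ra defK rig.
case: rig => _ _ _ rig_a; have [Kr _ _] := K_sqrt_anti ra defK.
have [gamma [delta [Kgamma delta_neq0 ydelta delta2]]] := dihedral_sqrt.
have [u [v euv]] := norm_K_form ra defK Kgamma.
set t := u ^+ 2 - a * v ^+ 2 in euv.
have t_neq0 : t != 0.
  apply: contraNneq delta_neq0 => t0.
  by move: (expf_eq0 delta 2); rewrite delta2 euv t0 scale0r eqxx => /esym/andP[].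
have [c [_ [tc | tac]]] : exists c : F, c != 0 /\ (t = c ^+ 2 \/ t = - a * c ^+ 2).
- by apply/(rig_a t t_neq0); exists u, v; rewrite mulNr.
- have := sqr_anti_fixed_neq (rmorph_alg gy c) ydelta delta_neq0.
  by rewrite delta2 euv tc -!in_algE rmorphXn eqxx.
have := sqr_anti_fixed_neq (z := r * (b * c)%:A) _ ydelta delta_neq0.
rewrite rmorphM /= rmorph_alg (K_fixed Kr S_gy) => /(_ erefl)/negP; apply.
rewrite delta2 euv tac exprMn ra -!in_algE -rmorphXn -rmorphM.
by rewrite exprMn b2m1 mulN1r mulrN mulNr.
Qed.

End G1Extension.

Local Open Scope ring_scope.

Theorem proposition3p8 (F : fieldType) (L : splittingFieldType F) :
  (2 \notin [pchar F])%N ->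
  galois 1%AS {:L} ->
  ('Gal({:L} / 1%AS) \isog
     Grp (x : y : (x ^+ 4, y ^+ 2, [~ x, y] ^+ 2, [~ [~ x, y], x] ^+ 2,
                   [~ [~ [~ x, y], x], x], [~ [~ [~ x, y], x], y])))%g ->
  exists K : {subfield L},
    [/\ C4_quadratic K,
        forall K' : {subfield L}, C4_quadratic K' -> K' = K,
        exists (a : F) (r : L), r ^+ 2 = a%:A /\ K = <<1; r>>%AS &
        forall (a : F) (r : L), r ^+ 2 = a%:A -> K = <<1; r>>%AS -> ~ rigid (- a)].
Proof.
move=> charF galL isoG.
case/homG1P: (isoGrp_hom isoG) => gx [gy [defGal relxy]].
have gy2 : (gy ^+ 2 = 1)%g by case/and5P: relxy => _ /eqP.
have [phi4 [phi4x phi4y]] := G1_morphism isoG defGal relxy G1rel_rot_1.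
have [phi8 [phi8x phi8y]] := G1_morphism isoG defGal relxy G1rel_rot_refl.
exists (K phi4); split.
- exact: (C4_quadratic_K (phi4 := phi4) galL defGal phi4x phi4y).
- exact: (C4_quadratic_unique (phi4 := phi4) galL defGal gy2 phi4x phi4y).
- exact: (K_sqrt (phi4 := phi4) galL defGal phi4x phi4y charF).
- exact: (not_rigid (phi4 := phi4) (phi8 := phi8) galL defGal phi4x phi4y phi8x phi8y charF).
Qed.
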